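(* Let $n,k$ be integers with $2\le k<n$. Then $$\overline{\mathrm{dist}}_F(\mathcal{S}^{n,k},\mathcal{S}^n_+)\le \frac{n-k}{n+k-2}.$$
   Context: $\mathcal{S}^n_+$ denotes the cone of $n\times n$ real symmetric positive semidefinite (PSD) matrices. For integers $2\le k\le n$, the $k$-PSD closure $\mathcal{S}^{n,k}$ is the set of all $n\times n$ real symmetric matrices all of whose $k\times k$ principal submatrices are PSD. For a matrix $M$, $\mathrm{dist}_F(M,\mathcal{S}^n_+)=\inf_{N\in\mathcal{S}^n_+}\|M-N\|_F$, where $\|\cdot\|_F$ is the Frobenius norm. For a set $\mathcal{K}$ of $n\times n$ matrices, $\overline{\mathrm{dist}}_F(\mathcal{K},\mathcal{S}^n_+)=\sup_{M\in\mathcal{K},\ \|M\|_F=1}\mathrm{dist}_F(M,\mathcal{S}^n_+)$. *)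

From mathcomp Require Import all_boot all_order all_algebra.
From mathcomp Require Import all_classical all_reals.
Set Implicit Arguments. Unset Strict Implicit. Unset Printing Implicit Defensive.
Import Order.TTheory GRing.Theory Num.Theory.
Local Open Scope ring_scope.
Local Open Scope classical_set_scope.

Definition symmetric (R : realType) (n : nat) (A : 'M[R]_n) : Prop := A^T = A.

Definition psd (R : realType) (n : nat) (A : 'M[R]_n) : Prop :=
  symmetric A /\ forall x : 'cV[R]_n, 0 <= (x^T *m A *m x) 0 0.

Definition PSDcone (R : realType) (n : nat) : set 'M[R]_n := [set A | psd A].

Definition principal_sub (R : realType) (n k : nat) (f : 'I_k -> 'I_n)
  (A : 'M[R]_n) : 'M[R]_k := mxsub f f A.

Definition kPSD (R : realType) (n k : nat) : set 'M[R]_n :=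
  [set A | symmetric A /\
     forall f : 'I_k -> 'I_n, {homo f : i j / (i < j)%N >-> (i < j)%N} ->
       psd (principal_sub f A)].

Definition normF (R : realType) (m n : nat) (A : 'M[R]_(m, n)) : R :=
  Num.sqrt (\sum_(i < m) \sum_(j < n) A i j ^+ 2).

Definition distF_psd (R : realType) (n : nat) (M : 'M[R]_n) : R :=
  inf [set normF (M - N) | N in @PSDcone R n].

Definition distbarF_psd (R : realType) (n : nat) (K : set 'M[R]_n) : R :=
  sup [set distF_psd M | M in K `&` [set M | normF M = 1]].

From mathcomp Require Import all_boot all_order all_algebra.
From mathcomp Require Import all_classical all_reals.
From mathcomp Require Import zify ring.
Import Order.TTheory GRing.Theory Num.Theory.
Local Open Scope ring_scope.

(* If every k x k principal submatrix of M is PSD, then summing their quadratic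
   forms over all k-subsets of indices shows that the entrywise product of M with
   the weights n - 1 (diagonal) and k - 1 (off the diagonal) is PSD: an index lies
   in 'C(n-1, k-1) k-subsets and a pair of indices in 'C(n-2, k-2) of them, and
   (n-1) 'C(n-2, k-2) = (k-1) 'C(n-1, k-1).  Rescaling that matrix by 2/(n+k-2)
   gives a PSD matrix N for which every entry of M - N is +-(n-k)/(n+k-2) times
   the corresponding entry of M, so dist_F(M, S^n_+) <= (n-k)/(n+k-2) ||M||_F. *)

Section CardSets.
Variable T : finType.

Lemma card_supsets k (S : {set T}) : (#|S| <= k)%N ->
  #|[set I : {set T} | #|I| == k & S \subset I]| = 'C(#|T| - #|S|, k - #|S|).
Proof.
move=> leSk.
have -> : (#|T| - #|S| = #|~: S|)%N by rewrite [#|~: S|]cardsCs finset.setCK.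
rewrite -cards_draws.
have DUK (I : {set T}) : S \subset I -> I :\: S :|: S = I.
  by move=> sSI; rewrite finset.setUC -{2}(setID I S) (finset.setIidPr sSI).
have UDK (J : {set T}) : J \subset ~: S -> (J :|: S) :\: S = J.
  rewrite -finset.disjoints_subset => /finset.setDidPl dJS.
  by rewrite finset.setDUl finset.setDv finset.setU0.
rewrite -(card_in_imset (f := fun I => I :\: S)) => [|I1 I2]; last first.
  by rewrite !inE => /andP[_ /DUK {2}<-] /andP[_ /DUK {2}<-] ->.
apply: eq_card => J; rewrite !inE; apply/imsetP/andP => [[I]|[sJ /eqP cJ]].
  by rewrite inE => /andP[/eqP <- sSI] ->; rewrite subsetDr cardsDS.
exists (J :|: S); last by rewrite UDK.
have := cardsDS (finset.subsetUr J S); rewrite UDK // cJ inE finset.subsetUr andbT.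
by have := subset_leq_card (finset.subsetUr J S); lia.
Qed.

Lemma sum_card_sets_pairs (V : nmodType) k (q : T -> T -> V) : (1 < k)%N ->
  \sum_(I : {set T} | #|I| == k) \sum_(i in I) \sum_(j in I) q i j =
  \sum_i \sum_j q i j *+ (if i == j then 'C(#|T| - 1, k - 1) else 'C(#|T| - 2, k - 2)).
Proof.
move=> lt1k.
have card_sets i j : #|[set I : {set T} | #|I| == k & [set i; j] \subset I]| =
    if i == j then 'C(#|T| - 1, k - 1) else 'C(#|T| - 2, k - 2).
  have [<-|ij] := eqVneq i j; first by rewrite finset.setUid card_supsets cards1 // ltnW.
  by rewrite card_supsets cards2 ij.
transitivity (\sum_(I : {set T} | #|I| == k) \sum_i \sum_j q i j *+ ([set i; j] \subset I)).
  apply: eq_bigr => I _; rewrite big_mkcond; apply: eq_bigr => i _ /=.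
  under [RHS]eq_bigr do rewrite finset.subUset !finset.sub1set.
  case: (i \in I) => /=; last by rewrite big1 // => j _; rewrite mulr0n.
  by rewrite big_mkcond; apply: eq_bigr => j _; case: (j \in I).
rewrite exchange_big; apply: eq_bigr => i _; rewrite exchange_big; apply: eq_bigr => j _.
rewrite -card_sets sumrMnr; congr (_ *+ _).
rewrite -sum1_card big_mkcond [RHS]big_mkcond; apply: eq_bigr => I _.
by rewrite inE; case: (#|I| == k); case: (_ \subset _).
Qed.

End CardSets.

Lemma homo_enum_val n (I : {set 'I_n}) :
  {homo @enum_val _ (mem I) : i j / (i < j)%N >-> (i < j)%N}.
Proof.
move=> i j lt_ij; have x0 : 'I_n by exact: enum_val i.
have sorted_I : sorted ltn (map val (enum I)).
  have -> : enum I = [seq i <- enum 'I_n | i \in I] by rewrite enumT /enum_mem.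
  apply: (subseq_sorted ltn_trans (map_subseq _ (filter_subseq _ _))).
  by rewrite val_enum_ord iota_ltn_sorted.
have size_I : size (map val (enum I)) = #|I| by rewrite size_map cardE.
have := sorted_ltn_nth ltn_trans (val x0) sorted_I i j.
by rewrite !inE size_I !ltn_ord !(nth_map x0) -?cardE // !(enum_val_nth x0); apply.
Qed.

Lemma mxquad_sum (R : pzRingType) m (A : 'M[R]_m) (y : 'cV[R]_m) :
  (y^T *m A *m y) 0 0 = \sum_i \sum_j y i 0 * A i j * y j 0.
Proof.
rewrite !mxE; under eq_bigr do rewrite !mxE big_distrl /=.
by rewrite exchange_big; apply: eq_bigr => i _; apply: eq_bigr => j _; rewrite !mxE.
Qed.

Lemma kPSD_subset_quad_ge0 (R : realType) n k (M : 'M[R]_n) (I : {set 'I_n}) (x : 'I_n -> R) :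
  kPSD k M -> #|I| = k -> 0 <= \sum_(i in I) \sum_(j in I) x i * M i j * x j.
Proof.
move=> [_ psd_sub] cardI; subst k.
have [_ /(_ (\col_a x (enum_val a)))] := psd_sub _ (@homo_enum_val _ I).
rewrite mxquad_sum; congr (0 <= _).
rewrite [RHS]big_enum_val; under [RHS]eq_bigr do rewrite big_enum_val.
by apply: eq_bigr => a _; apply: eq_bigr => b _; rewrite !mxE.
Qed.

Lemma kPSD_weighted_quad_ge0 (R : realType) n k (M : 'M[R]_n) (x : 'I_n -> R) :
  (2 <= k <= n)%N -> kPSD k M ->
  0 <= \sum_i \sum_j (if i == j then (n - 1)%:R else (k - 1)%:R) * (x i * M i j * x j).
Proof.
move=> /andP[le2k lekn] kM.
set c := 'C(n - 1, k - 1).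
have c_gt0 : (0 < c)%N by rewrite bin_gt0 leq_sub2r.
have binE : ((n - 1) * 'C(n - 2, k - 2) = (k - 1) * c)%N.
  rewrite /c; have -> : (k - 1 = (k - 2).+1)%N by lia.
  have -> : (n - 2 = (n - 1).-1)%N by lia.
  exact: mul_bin_diag.
rewrite -(pmulr_rge0 _ (_ : 0 < c%:R)) ?ltr0n // mulr_sumr.
have -> : \sum_i c%:R * \sum_j (if i == j then (n - 1)%:R else (k - 1)%:R) * (x i * M i j * x j)
    = (n - 1)%:R * \sum_(I : {set 'I_n} | #|I| == k) \sum_(i in I) \sum_(j in I) x i * M i j * x j.
  rewrite sum_card_sets_pairs // card_ord mulr_sumr; apply: eq_bigr => i _.
  rewrite !mulr_sumr; apply: eq_bigr => j _.
  rewrite -[x i * M i j * x j *+ _]mulr_natl.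
  case: eqVneq => _; first by rewrite mulrCA.
  by rewrite !mulrA -!natrM binE mulnC.
by rewrite mulr_ge0 ?ler0n // sumr_ge0 // => I /eqP; exact: kPSD_subset_quad_ge0.
Qed.

Definition kaverage {R : realType} {n : nat} (k : nat) (M : 'M[R]_n) : 'M[R]_n :=
  \matrix_(i, j) (2 * (if i == j then (n - 1)%:R else (k - 1)%:R) / (n + k - 2)%:R * M i j).

Lemma psd_kaverage (R : realType) n k (M : 'M[R]_n) :
  (2 <= k <= n)%N -> kPSD k M -> psd (kaverage k M).
Proof.
move=> kn kM; have d_gt0 : 0 < (n + k - 2)%:R :> R.
  by move: kn => /andP[le2k lekn]; rewrite ltr0n; lia.
split=> [|y].
  apply/matrixP => i j; have [symM _] := kM.
  by rewrite !mxE eq_sym -[in RHS]symM mxE.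
rewrite mxquad_sum.
have -> : \sum_i \sum_j y i 0 * kaverage k M i j * y j 0 = 2 / (n + k - 2)%:R *
    \sum_i \sum_j (if i == j then (n - 1)%:R else (k - 1)%:R) * (y i 0 * M i j * y j 0).
  rewrite mulr_sumr; apply: eq_bigr => i _; rewrite mulr_sumr; apply: eq_bigr => j _.
  by rewrite mxE; set w := (if i == j then _ else _); ring.
by apply: mulr_ge0; [rewrite divr_ge0 ?ltW | exact: kPSD_weighted_quad_ge0].
Qed.

Lemma normF_eq_scale (R : realType) m p (A B : 'M[R]_(m, p)) c : 0 <= c ->
  (forall i j, A i j ^+ 2 = c ^+ 2 * B i j ^+ 2) -> normF A = c * normF B.
Proof.
move=> c_ge0 AB; rewrite /normF -[c]ger0_norm // -sqrtr_sqr -sqrtrM ?sqr_ge0 //.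
by congr Num.sqrt; rewrite mulr_sumr; apply: eq_bigr => i _; rewrite mulr_sumr; apply: eq_bigr.
Qed.

Lemma normF_sub_kaverage (R : realType) n k (M : 'M[R]_n) : (2 <= k <= n)%N ->
  normF (M - kaverage k M) = (n - k)%:R / (n + k - 2)%:R * normF M.
Proof.
move=> /andP[le2k lekn]; have d_gt0 : 0 < (n + k - 2)%:R :> R by rewrite ltr0n; lia.
apply: normF_eq_scale => [|i j]; first by rewrite divr_ge0 ?ler0n ?ltW.
rewrite !mxE !natrB ?natrD; try lia.
by case: eqVneq => _; field; rewrite -natrD -natrB ?pnatr_eq0; lia.
Qed.

Lemma distF_psd_le (R : realType) n (M N : 'M[R]_n) : psd N -> distF_psd M <= normF (M - N).
Proof.
move=> psdN; apply: ge_inf; last by exists N.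
by exists 0 => _ [P _ <-]; exact: sqrtr_ge0.
Qed.

Lemma distbarF_psd_le (R : realType) n (K : set 'M[R]_n) c : 0 <= c ->
  (forall M, K M -> distF_psd M <= c * normF M) -> distbarF_psd K <= c.
Proof.
move=> c_ge0 le_dist; rewrite /distbarF_psd.
have [->|ne] := eqVneq [set distF_psd M | M in K `&` [set M | normF M = 1]]%classic set0.
  by rewrite sup0.
apply: ge_sup => [|_ [M [KM /= normM] <-]]; first exact/set0P.
by rewrite -[c]mulr1 -normM le_dist.
Qed.

Theorem theorem1 (R : realType) (n k : nat) (hk : (2 <= k)%N) (hkn : (k < n)%N) :
  distbarF_psd (@kPSD R n k) <= (n - k)%:R / (n + k - 2)%:R.
Proof.
have kn : (2 <= k <= n)%N by rewrite hk ltnW.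
apply: distbarF_psd_le => [|M kM]; first by rewrite divr_ge0 ?ler0n.
rewrite -normF_sub_kaverage //.
exact/distF_psd_le/psd_kaverage.
Qed.
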